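(* Let $N$ be a finite set with $|N|\geq 2$. An inequality $\langle o,\eta\rangle\le u$ for $\eta\in P_N$, where $o\in\mathbb{R}^{\Upsilon}$ and $u\in\mathbb{R}$, is facet-defining for $P_N$ and tight at all full graphs over $N$ (i.e. $\langle o,\eta_H\rangle=u$ for every full graph $H$) if and only if there exists an extreme standardized supermodular set function $m:\mathcal{P}(N)\to\mathbb{R}$ such that $o(a|B)=m(\{a\}\cup B)-m(B)$ for all $(a|B)\in\Upsilon$ and $u$ is the common value of $\langle o,\eta_H\rangle$ over full graphs $H$ over $N$.
   Context: $\mathrm{DAG}(N)$ is the set of acyclic directed graphs over $N$; $\mathrm{pa}_G(a)$ is the parent set of $a$ in $G$. A full graph is an acyclic directed graph over $N$ in which every pair of distinct nodes is adjacent. $\Upsilon=\{(a|B): a\in N,\ \emptyset\neq B\subseteq N\setminus\{a\}\}$; for $G\in\mathrm{DAG}(N)$, $\eta_G\in\mathbb{R}^{\Upsilon}$ has $\eta_G(a|B)=1$ if $B=\mathrm{pa}_G(a)$ and $0$ otherwise; $P_N=\mathrm{conv}\{\eta_G:G\in\mathrm{DAG}(N)\}$ is the family-variable polytope. A set function $m:\mathcal{P}(N)\to\mathbb{R}$ is standardized if $m(S)=0$ whenever $|S|\le 1$, and supermodular if $m(U)+m(V)\le m(U\cup V)+m(U\cap V)$ for all $U,V\subseteq N$. The standardized supermodular functions form a pointed polyhedral cone; $m$ is extreme if it generates an extreme ray of this cone. *)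

From mathcomp Require Import all_boot all_order all_algebra.
From mathcomp Require Import reals.
Set Implicit Arguments. Unset Strict Implicit. Unset Printing Implicit Defensive.
Import Order.TTheory GRing.Theory Num.Theory.
Local Open Scope ring_scope.

Section FamilyVariablePolytope.
Variables (R : realType) (N : finType).

(* A directed graph over N is given by its parent sets: G a = pa_G(a). *)
Definition graph := {ffun N -> {set N}}.

Definition gedge (G : graph) : rel N := fun x y => x \in G y.

Definition acyclic (G : graph) : bool :=
  [forall a : N, forall b : N, (b \in G a) ==> ~~ connect (gedge G) a b].

Definition full_graph (G : graph) : bool :=
  acyclic G && [forall a : N, forall b : N,
    (a != b) ==> ((a \in G b) || (b \in G a))].

Definition Ups := {p : N * {set N} | (p.2 != set0) && (p.1 \notin p.2)}.

Definition vec := {ffun Ups -> R}.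

Definition dotv (o x : vec) : R := \sum_(p : Ups) o p * x p.

Definition eta (G : graph) : vec :=
  [ffun p : Ups => ((G (val p).1 == (val p).2) : nat)%:R].

Definition PN (x : vec) : Prop :=
  exists lam : graph -> R,
    (forall G, acyclic G -> 0 <= lam G) /\
    \sum_(G : graph | acyclic G) lam G = 1 /\
    forall p, x p = \sum_(G : graph | acyclic G) lam G * eta G p.

Definition has_aff_indep (S : vec -> Prop) (k : nat) : Prop :=
  exists x : 'I_k.+1 -> vec,
    (forall i, S (x i)) /\
    forall c : 'I_k.+1 -> R,
      \sum_i c i = 0 -> (forall p, \sum_i c i * x i p = 0) -> forall i, c i = 0.

Definition aff_dim (S : vec -> Prop) (d : nat) : Prop :=
  has_aff_indep S d /\ ~ has_aff_indep S d.+1.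

Definition valid_ineq (o : vec) (u : R) : Prop := forall x, PN x -> dotv o x <= u.

Definition face_of (o : vec) (u : R) (x : vec) : Prop := PN x /\ dotv o x = u.

Definition facet_defining (o : vec) (u : R) : Prop :=
  valid_ineq o u /\ exists d, aff_dim PN d.+1 /\ aff_dim (face_of o u) d.

Definition tight_at_full (o : vec) (u : R) : Prop :=
  forall H : graph, full_graph H -> dotv o (eta H) = u.

Definition standardized (m : {set N} -> R) : Prop :=
  forall S : {set N}, (#|S| <= 1)%N -> m S = 0.

Definition supermodular (m : {set N} -> R) : Prop :=
  forall U V : {set N}, m U + m V <= m (U :|: V) + m (U :&: V).

Definition std_supmod (m : {set N} -> R) : Prop := standardized m /\ supermodular m.

Definition extreme (m : {set N} -> R) : Prop :=
  std_supmod m /\ ~ (forall S, m S = 0) /\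
  forall m1 m2 : {set N} -> R, std_supmod m1 -> std_supmod m2 ->
    (forall S, m S = m1 S + m2 S) ->
    exists t : R, 0 <= t /\ forall S, m1 S = t * m S.

End FamilyVariablePolytope.

From mathcomp Require Import all_boot all_order all_algebra.
From mathcomp Require Import reals.
From mathcomp Require Import zify ring lra.
From Stdlib Require Import Classical.
Import Order.TTheory GRing.Theory Num.Theory.
Set Implicit Arguments. Unset Strict Implicit. Unset Printing Implicit Defensive.
Local Open Scope ring_scope.

(* For [o] tight at the full graphs, let [m S] be the score over [S] of a full
   graph in which [S] is an initial segment; by tightness it does not depend on
   the graph, [m] is standardized and [o (a|B) = m (a |: B) - m B].  The score
   of an acyclic graph then telescopes along a topological order, so [o] is
   valid exactly when [m] is supermodular: [uv_graph U V] has score [m N] minus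
   the supermodularity gap of [U] and [V].  If [o] is a facet, a decomposition
   [m = m1 + m2] gives valid inequalities tight on the facet, hence nonnegative
   multiples of it, so [m] is extreme.  Conversely, if [m] is extreme, a vector
   [w] orthogonal to the vertices of the face is itself tight at full graphs and
   its set function [m'] has zero gaps wherever [m] has; then [m +- e m'] split
   [m], so [m' = 0] and [w = 0]: the face spans a hyperplane. *)

Section Acyclicity.
Variable N : finType.
Implicit Types (G : graph N) (S : {set N}).

Lemma acyclic_irrefl G a : acyclic G -> a \notin G a.
Proof.
move/forallP/(_ a)/forallP/(_ a)/implyP => h; apply/negP => /h.
by rewrite connect0.
Qed.

Lemma acyclic_of_rank G (r : N -> nat) :
  (forall a b, b \in G a -> (r b < r a)%N) -> acyclic G.
Proof.
move=> hr; apply/forallP => a; apply/forallP => b; apply/implyP => hb.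
apply/negP => /connectP [p hp hl].
have path_rank q x : path (gedge G) x q -> (r x <= r (last x q))%N.
  elim: q x => [|y q IH] x //= /andP [hxy hq].
  have := IH _ hq; have := hr _ _ hxy; lia.
have := path_rank _ _ hp; rewrite -hl; have := hr _ _ hb; lia.
Qed.

(* An element of [S] with the most ancestors is a parent of no element of [S]. *)
Lemma acyclic_sink G S : acyclic G -> S != set0 ->
  exists2 a, a \in S & forall b, b \in S -> a \notin G b.
Proof.
move=> hG /set0Pn [a0 ha0].
pose anc x := #|[set y | connect (gedge G) y x]|.
case: (@arg_maxnP _ a0 (mem S) anc ha0) => a haS hmax.
exists a => // b hb; apply/negP => hab.
have : (anc a < anc b)%N.
  apply: proper_card; apply/properP; split.
    apply/subsetP => y; rewrite !inE => hy.
    exact: connect_trans hy (connect1 _).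
  exists b; first by rewrite inE connect0.
  by rewrite inE; move/forallP/(_ b)/forallP/(_ a)/implyP: hG; apply.
by have := hmax _ hb; lia.
Qed.

Definition ancestral G S := forall a, a \in S -> G a \subset S.

Lemma ancestral_setT G : ancestral G setT.
Proof. by move=> a _; apply: subsetT. Qed.

Lemma ancestralD1 G S a : ancestral G S ->
  (forall b, b \in S -> a \notin G b) -> ancestral G (S :\ a).
Proof.
move=> hS hsink x; rewrite !inE => /andP [_ hx]; apply/subsetP => y hy.
rewrite !inE (subsetP (hS x hx) _ hy) andbT.
by apply: contraTneq hy => ->; apply: hsink.
Qed.

Lemma ancestral_ind G (P : {set N} -> Prop) : acyclic G -> P set0 ->
  (forall S a, ancestral G S -> a \in S -> (forall b, b \in S -> a \notin G b) ->
     P (S :\ a) -> P S) ->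
  forall S, ancestral G S -> P S.
Proof.
move=> hG P0 Pstep S; move: {2}#|S| (erefl #|S|) => k.
elim: k S => [|k IH] S hk hS.
  by move/eqP: hk; rewrite cards_eq0 => /eqP ->.
have hS0 : S != set0 by rewrite -card_gt0 hk.
have [a haS hsink] := acyclic_sink hG hS0.
have hk' : #|S :\ a| = k by move: hk; rewrite (cardsD1 a S) haS; lia.
exact: Pstep hS haS hsink (IH _ hk' (ancestralD1 hS hsink)).
Qed.

Lemma sink_parentsD1 G S a : acyclic G -> ancestral G S -> a \in S ->
  G a \subset S :\ a.
Proof.
move=> hG hS haS; apply/subsetP => x hx; rewrite !inE (subsetP (hS a haS) _ hx) andbT.
by apply: contraTneq hx => ->; apply: acyclic_irrefl.
Qed.

Lemma full_sink_parents G S a : full_graph G -> ancestral G S -> a \in S ->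
  (forall b, b \in S -> a \notin G b) -> G a = S :\ a.
Proof.
move=> /andP [hG /forallP hF] hS haS hsink; apply/eqP; rewrite eqEsubset.
rewrite sink_parentsD1 //=; apply/subsetP => x; rewrite !inE => /andP [hxa hx].
by have /forallP/(_ a)/implyP/(_ hxa)/orP [] := hF x; last by rewrite (negbTE (hsink x hx)).
Qed.

End Acyclicity.

Section Telescoping.
Variables (R : realType) (N : finType).
Implicit Types (m : {set N} -> R) (G : graph N) (S : {set N}).

Definition gain m G a : R := m (a |: G a) - m (G a).

Lemma sum_gain_le m G S : m set0 = 0 -> supermodular m -> acyclic G ->
  ancestral G S -> \sum_(x in S) gain m G x <= m S.
Proof.
move=> m0 hsm hG; apply: (ancestral_ind (P := fun S => _ <= m S)) => //.
  by rewrite big_set0 m0.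
move=> {}S a hS haS _ IH; rewrite (big_setD1 a haS) /=.
have hGa := sink_parentsD1 hG hS haS.
have hU : (a |: G a) :|: (S :\ a) = S.
  by rewrite -setUA (setUidPr hGa) setD1K.
have hI : (a |: G a) :&: (S :\ a) = G a.
  apply/setP => x; rewrite !inE; case: eqVneq => [->|_] /=.
    by rewrite (negbTE (acyclic_irrefl a hG)).
  by rewrite andb_idr // => /(subsetP (hS a haS)).
by have := hsm (a |: G a) (S :\ a); rewrite hU hI /gain; lra.
Qed.

Lemma sum_gain_full m G S : m set0 = 0 -> full_graph G ->
  ancestral G S -> \sum_(x in S) gain m G x = m S.
Proof.
move=> m0 hF; have hG : acyclic G by case/andP: hF.
apply: (ancestral_ind (P := fun S => _ = m S)) => //; first by rewrite big_set0 m0.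
move=> {}S a hS haS hsink IH.
by rewrite (big_setD1 a haS) /= IH /gain (full_sink_parents hF hS haS hsink) setD1K //; lra.
Qed.

End Telescoping.

Section Scores.
Variables (R : realType) (N : finType).
Implicit Types (o : vec R N) (G : graph N) (m : {set N} -> R) (S : {set N}).

(* The coordinate of [o] at the family [(a|B)], read as [0] outside [Ups]. *)
Definition fam_coef o a (B : {set N}) : R := oapp o 0 (insub (a, B) : option (Ups N)).

Definition score o G : R := \sum_a fam_coef o a (G a).

Lemma dotv_eta o G : dotv o (eta R G) = score o G.
Proof.
rewrite /dotv /score (partition_big (fun p : Ups N => (val p).1) predT) //=.
apply: eq_bigr => a _; rewrite /fam_coef; case: insubP => [p0 _ hp0 | hn] /=.
- rewrite (bigD1 p0) /=; last by rewrite hp0.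
  rewrite big1 ?addr0; first by rewrite ffunE hp0 /= eqxx mulr1.
  move=> p /andP[/eqP hp1 hne]; rewrite ffunE hp1.
  case: eqP => [he|]; last by rewrite mulr0.
  case/negP: hne; apply/eqP/val_inj; rewrite hp0.
  by move: hp1 he; case: p => [[x B] hp] /= -> ->.
- apply: big1 => p /eqP hp1; rewrite ffunE hp1.
  case: eqP => [he|]; last by rewrite mulr0.
  by case/negP: hn; move: hp1 he; case: p => [[x B] hp] /= ? ?; subst.
Qed.

Lemma PN_eta G : acyclic G -> PN (eta R G).
Proof.
move=> hG; exists (fun H => (H == G)%:R); split; first by move=> H _; case: (H == G).
split=> [|p].
  by rewrite (bigD1 G) //= eqxx big1 ?addr0 // => H /andP [_ /negbTE ->].
rewrite (bigD1 G) //= eqxx mul1r big1 ?addr0 // => H /andP [_ /negbTE ->].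
by rewrite mul0r.
Qed.

Lemma valid_ineq_acyclic o u :
  (forall G, acyclic G -> score o G <= u) -> valid_ineq o u.
Proof.
move=> h x [lam [hl0 [hl1 hx]]].
have -> : dotv o x = \sum_(G | acyclic G) lam G * score o G.
  rewrite /dotv (eq_bigr (fun p => \sum_(G | acyclic G) lam G * (o p * eta R G p))).
    by rewrite exchange_big; apply: eq_bigr => G _; rewrite -dotv_eta mulr_sumr.
  by move=> p _; rewrite hx mulr_sumr; apply: eq_bigr => G _; ring.
rewrite -[u]mul1r -hl1 mulr_suml; apply: ler_sum => G hG.
by apply: ler_wpM2l; [exact: hl0 | exact: h].
Qed.

Definition induced m o :=
  forall p : Ups N, o p = m ((val p).1 |: (val p).2) - m (val p).2.

Lemma std_set0 m : standardized m -> m set0 = 0.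
Proof. by move=> hs; apply: hs; rewrite cards0. Qed.

Lemma fam_coef_induced m o a (B : {set N}) : standardized m -> induced m o -> a \notin B ->
  fam_coef o a B = m (a |: B) - m B.
Proof.
move=> hs ho haB; rewrite /fam_coef; case: insubP => [p _ hp | hn] /=; first by rewrite ho hp.
have -> : B = set0 by apply/eqP; move: hn; rewrite /= haB andbT negbK.
by rewrite setU0 (hs [set a]) ?cards1 // (std_set0 hs) subr0.
Qed.

Lemma score_induced m o G : standardized m -> induced m o -> acyclic G ->
  score o G = \sum_(a in setT) gain m G a.
Proof.
move=> hs ho hG; rewrite [RHS](eq_bigl predT) => [|a]; last by rewrite inE.
by apply: eq_bigr => a _; rewrite (fam_coef_induced hs ho (acyclic_irrefl a hG)).
Qed.

Lemma score_induced_le m o G : std_supmod m -> induced m o -> acyclic G ->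
  score o G <= m setT.
Proof.
move=> [hs hsm] ho hG; rewrite (score_induced hs ho hG).
exact: sum_gain_le (std_set0 hs) hsm hG (ancestral_setT G).
Qed.

Lemma score_induced_full m o G : standardized m -> induced m o -> full_graph G ->
  score o G = m setT.
Proof.
move=> hs ho hF; rewrite (score_induced hs ho (proj1 (andP hF))).
exact: sum_gain_full (std_set0 hs) hF (ancestral_setT G).
Qed.

End Scores.

Section Orders.
Variables (R : realType) (N : finType).
Implicit Types (o : vec R N) (m : {set N} -> R) (S : {set N}) (b : N -> nat).

Definition lexrank b x : nat := (b x * #|N| + enum_rank x)%N.

Definition order_graph (r : N -> nat) : graph N := [ffun a => [set y | (r y < r a)%N]].

Definition initial_seg b S := forall x y, x \in S -> y \notin S -> (b x < b y)%N.

Lemma lexrank_lt b x y : (lexrank b x < lexrank b y)%N =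
  (b x < b y)%N || ((b x == b y) && (enum_rank x < enum_rank y)%N).
Proof.
rewrite /lexrank; have := ltn_ord (enum_rank x); have := ltn_ord (enum_rank y).
move: (b x) (b y) (nat_of_ord (enum_rank x)) (nat_of_ord (enum_rank y)).
move: #|N| => M bx bY ex ey hy hx; case: (ltngtP bx bY) => [h|h|->] /=.
- have : (bx.+1 * M <= bY * M)%N by rewrite leq_mul2r h orbT.
  by rewrite mulSn; lia.
- have : (bY.+1 * M <= bx * M)%N by rewrite leq_mul2r h orbT.
  by rewrite mulSn; lia.
- by rewrite ltn_add2l.
Qed.

Lemma lexrank_inj b : injective (lexrank b).
Proof.
move=> x y e; apply: enum_rank_inj; apply: val_inj => /=.
by have := congr1 (modn^~ #|N|) e; rewrite /lexrank !modnMDl !modn_small.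
Qed.

Lemma order_graph_full b : full_graph (order_graph (lexrank b)).
Proof.
apply/andP; split.
  by apply: (acyclic_of_rank (r := lexrank b)) => a c; rewrite ffunE inE.
apply/forallP => a; apply/forallP => c; apply/implyP => hac.
rewrite !ffunE !inE; case: ltngtP => //= h.
by move: hac; rewrite (lexrank_inj h) eqxx.
Qed.

Lemma order_graph_ancestral b S : initial_seg b S ->
  ancestral (order_graph (lexrank b)) S.
Proof.
move=> h a ha; apply/subsetP => y; rewrite ffunE inE lexrank_lt => hy.
by apply: contraLR hy => /(h _ _ ha); lia.
Qed.

Lemma sum_order_graph_induced m o b S : standardized m -> induced m o ->
  initial_seg b S -> \sum_(x in S) fam_coef o x (order_graph (lexrank b) x) = m S.
Proof.
move=> hs ho hb; have hF := order_graph_full b.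
rewrite -(sum_gain_full (std_set0 hs) hF (order_graph_ancestral hb)).
apply: eq_bigr => x _.
exact: fam_coef_induced hs ho (acyclic_irrefl x (proj1 (andP hF))).
Qed.

Lemma full_score_setT m o : standardized m -> induced m o ->
  score o (order_graph (lexrank (fun=> 0%N))) = m setT.
Proof. by move=> hs ho; apply: score_induced_full (order_graph_full _). Qed.

End Orders.

Section TightSetFunction.
Variables (R : realType) (N : finType).
Implicit Types (o : vec R N) (m : {set N} -> R) (S : {set N}) (b : N -> nat).

Definition glue b1 b2 S x : nat :=
  if x \in S then b1 x else (b2 x + (\sum_y b1 y).+1)%N.

Lemma glue_lt b1 x : (b1 x < (\sum_y b1 y).+1)%N.
Proof. by rewrite ltnS (bigD1 x) //= leq_addr. Qed.

Lemma order_graph_glue_in b1 b2 S x : initial_seg b1 S -> x \in S ->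
  order_graph (lexrank (glue b1 b2 S)) x = order_graph (lexrank b1) x.
Proof.
move=> h1 hx; apply/setP => y; rewrite !ffunE !inE !lexrank_lt /glue hx.
case: ifPn => // hy; have := h1 _ _ hx hy; have := glue_lt b1 x; lia.
Qed.

Lemma order_graph_glue_out b1 b2 S x : initial_seg b2 S -> x \notin S ->
  order_graph (lexrank (glue b1 b2 S)) x = order_graph (lexrank b2) x.
Proof.
move=> h2 hx; apply/setP => y; rewrite !ffunE !inE !lexrank_lt /glue (negbTE hx).
case: ifPn => [hy|_]; last by rewrite ltn_add2r eqn_add2r.
have := h2 _ _ hy hx; have := glue_lt b1 y; lia.
Qed.

(* The full graphs of [glue b1 b2 S] and of [b2] both have score [u], and
   their families outside [S] coincide. *)
Lemma tight_initial_sum o u S b1 b2 : tight_at_full o u ->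
  initial_seg b1 S -> initial_seg b2 S ->
  \sum_(x in S) fam_coef o x (order_graph (lexrank b1) x) =
  \sum_(x in S) fam_coef o x (order_graph (lexrank b2) x).
Proof.
move=> ht h1 h2; set b3 := glue b1 b2 S.
have := ht _ (order_graph_full b3); have := ht _ (order_graph_full b2).
rewrite !dotv_eta /score => e2 e3.
rewrite (bigID (mem S)) /= in e2; rewrite (bigID (mem S)) /= in e3.
have e31 : \sum_(x in S) fam_coef o x (order_graph (lexrank b3) x) =
          \sum_(x in S) fam_coef o x (order_graph (lexrank b1) x).
  by apply: eq_bigr => x hx; rewrite order_graph_glue_in.
have e32 : \sum_(x | x \notin S) fam_coef o x (order_graph (lexrank b3) x) =
          \sum_(x | x \notin S) fam_coef o x (order_graph (lexrank b2) x).
  by apply: eq_bigr => x hx; rewrite order_graph_glue_out.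
by rewrite e31 e32 in e3; lra.
Qed.

Definition tight_setfun o S : R :=
  \sum_(x in S) fam_coef o x (order_graph (lexrank (fun y => nat_of_bool (y \notin S))) x).

Lemma initial_seg_notin S : initial_seg (fun y => nat_of_bool (y \notin S)) S.
Proof. by move=> x y -> ->. Qed.
Arguments initial_seg_notin : clear implicits.

Lemma tight_setfun_std o : standardized (tight_setfun o).
Proof.
move=> S; rewrite leq_eqVlt ltnS leqn0 => /orP [/cards1P [x ->]|].
  rewrite /tight_setfun big_set1.
  have -> : order_graph (lexrank (fun y => nat_of_bool (y \notin [set x]))) x = set0.
    apply/setP => y; rewrite !ffunE !inE lexrank_lt !inE eqxx /=.
    by case: (eqVneq y x) => [->|]; rewrite ?ltnn ?andbF.
  by rewrite /fam_coef insubF //= eqxx.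
by rewrite cards_eq0 => /eqP ->; rewrite /tight_setfun big_set0.
Qed.

Lemma tight_setfun_induced o u : tight_at_full o u -> induced (tight_setfun o) o.
Proof.
move=> ht [[a B] hp] /=; have haB : a \notin B by case/andP: hp.
pose b x : nat := if x \in B then 0 else if x == a then 1 else 2.
have hbaB : initial_seg b (a |: B).
  move=> x y; rewrite /b !inE negb_or => + /andP [/negbTE -> /negbTE ->].
  by case: (x \in B); rewrite ?orbF => // /eqP ->; rewrite eqxx.
have hbB : initial_seg b B by move=> x y; rewrite /b => -> /negbTE ->; case: (y == a).
rewrite /tight_setfun (tight_initial_sum ht (initial_seg_notin (a |: B)) hbaB).
rewrite (tight_initial_sum ht (initial_seg_notin B) hbB) big_setU1 //=.
have -> : order_graph (lexrank b) a = B.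
  apply/setP => y; rewrite !ffunE !inE lexrank_lt /b (negbTE haB) eqxx.
  by case: ifP => //= _; case: eqVneq => [->|]; rewrite ?ltnn.
by rewrite /fam_coef (valK (exist _ (a, B) hp : Ups N)) /= addrK.
Qed.

Lemma induced_scale m1 m o1 o t : standardized m1 -> standardized m ->
  induced m1 o1 -> induced m o -> (forall p, o1 p = t * o p) ->
  forall S, m1 S = t * m S.
Proof.
move=> hs1 hs ho1 ho hp S.
rewrite -(sum_order_graph_induced hs1 ho1 (initial_seg_notin S)).
rewrite -(sum_order_graph_induced hs ho (initial_seg_notin S)) mulr_sumr.
by apply: eq_bigr => a _; rewrite /fam_coef; case: insub => [p|] /=; rewrite ?hp ?mulr0.
Qed.

End TightSetFunction.

Section Supermodularity.
Variables (R : realType) (N : finType).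
Implicit Types (o : vec R N) (m : {set N} -> R) (U V S : {set N}).

Definition supmod_gap m U V : R := m (U :|: V) + m (U :&: V) - m U - m V.

Definition uv_rank U V x : nat :=
  if x \in U then (if x \in V then 0 else 1) else if x \in V then 2 else 3.
Definition vu_rank U V x : nat :=
  if x \in U then (if x \in V then 0 else 2) else if x \in V then 1 else 3.

(* Nodes of [V :\: U] keep only their predecessors in [V]: read along
   [vu_rank] they gain [m V - m (U :&: V)] where the full graph of [uv_rank]
   gains [m (U :|: V) - m U]. *)
Definition uv_graph U V : graph N := [ffun x =>
  if x \in V :\: U then order_graph (lexrank (uv_rank U V)) x :&: V
  else order_graph (lexrank (uv_rank U V)) x].

Lemma uv_graph_acyclic U V : acyclic (uv_graph U V).
Proof.
apply: (acyclic_of_rank (r := lexrank (uv_rank U V))) => a c; rewrite ffunE.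
by case: ifP; rewrite ?inE ffunE inE // => _ /andP [].
Qed.

Lemma uv_graph_diff U V x : x \in V :\: U ->
  uv_graph U V x = order_graph (lexrank (vu_rank U V)) x.
Proof.
rewrite ffunE => hx; rewrite hx; move: hx; rewrite inE => /andP [/negbTE hxU hxV].
apply/setP => y; rewrite !ffunE !inE !lexrank_lt /uv_rank /vu_rank hxU hxV.
by case: (y \in U); case: (y \in V); rewrite /= ?andbT.
Qed.

Lemma uv_initial_segs U V :
  [/\ initial_seg (uv_rank U V) U, initial_seg (uv_rank U V) (U :|: V),
      initial_seg (vu_rank U V) (U :&: V) & initial_seg (vu_rank U V) V].
Proof.
by split=> x y; rewrite /uv_rank /vu_rank ?inE;
  case: (x \in U); case: (x \in V); case: (y \in U); case: (y \in V).
Qed.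

Lemma score_uv_graph m o U V : standardized m -> induced m o ->
  score o (uv_graph U V) = m setT - supmod_gap m U V.
Proof.
move=> hs ho; have [iU iUV iUV' iV] := uv_initial_segs U V.
set f := fun x => fam_coef o x (order_graph (lexrank (uv_rank U V)) x).
set f' := fun x => fam_coef o x (order_graph (lexrank (vu_rank U V)) x).
have hscore : score o (uv_graph U V) =
    \sum_(x in V :\: U) f' x + \sum_(x | x \notin V :\: U) f x.
  rewrite /score (bigID (mem (V :\: U))) /=; congr (_ + _).
    by apply: eq_bigr => x hx; rewrite /f' uv_graph_diff.
  by apply: eq_bigr => x hx; rewrite /f ffunE (negbTE hx).
have hT : \sum_x f x = m setT.
  rewrite -(sum_order_graph_induced hs ho (b := uv_rank U V)) => [|x y _]; last by rewrite inE.
  by apply: eq_bigl => x; rewrite inE.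
have hUV : \sum_(x in V :\: U) f x = m (U :|: V) - m U.
  rewrite -(sum_order_graph_induced hs ho iUV) -(sum_order_graph_induced hs ho iU).
  rewrite (big_setID (A := U :|: V) U) /= (setIidPr (subsetUl U V)) addrC addrK.
  by apply: eq_bigl => x; rewrite !inE; case: (x \in U).
have hVU : \sum_(x in V :\: U) f' x = m V - m (U :&: V).
  rewrite -(sum_order_graph_induced hs ho iV) -(sum_order_graph_induced hs ho iUV').
  rewrite (big_setID (A := V) (U :&: V)) /= (setIidPr (subsetIr U V)) addrC addrK.
  by apply: eq_bigl => x; rewrite !inE; case: (x \in U); case: (x \in V).
have := hT; rewrite (bigID (mem (V :\: U))) /= hUV.
by rewrite hscore hVU /supmod_gap; lra.
Qed.

Lemma valid_induced_supermodular m o : standardized m -> induced m o ->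
  valid_ineq o (m setT) -> supermodular m.
Proof.
move=> hs ho hval U V; have := hval _ (PN_eta R (uv_graph_acyclic U V)).
by rewrite dotv_eta (score_uv_graph _ _ hs ho) /supmod_gap; lra.
Qed.

Lemma induced_valid m o : std_supmod m -> induced m o -> valid_ineq o (m setT).
Proof. by move=> hm ho; apply: valid_ineq_acyclic => G; apply: score_induced_le. Qed.

Lemma supmod_ge0 m S : std_supmod m -> 0 <= m S.
Proof.
move=> [hs hsm]; move: {2}#|S| (erefl #|S|) => k.
elim: k S => [|k IH] S hk; first by rewrite hs // hk.
have /set0Pn [a ha] : S != set0 by rewrite -card_gt0 hk.
have hk' : #|S :\ a| = k by move: hk; rewrite (cardsD1 a S) ha; lia.
have := hsm (S :\ a) [set a]; rewrite setUC setD1K // (hs [set a]) ?cards1 //.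
have -> : (S :\ a) :&: [set a] = set0 by apply/setP => x; rewrite !inE andbC; case: eqVneq.
by have := IH _ hk'; rewrite (std_set0 hs); lra.
Qed.

Lemma extreme_setT_neq0 m : extreme m -> m setT != 0.
Proof.
move=> [hm [hnz _]]; apply: contra_notN hnz => /eqP hT S.
have := supmod_ge0 S hm; have := supmod_ge0 (~: S) hm; have := hm.2 S (~: S).
by rewrite setUCr setICr (std_set0 hm.1) hT; lra.
Qed.

End Supermodularity.

Lemma small_multiple_le (R : realType) (I : finType) (s s' : I -> R) :
  (forall i, 0 <= s i) -> (forall i, s i = 0 -> s' i = 0) ->
  exists2 e : R, 0 < e & forall i, `|e * s' i| <= s i.
Proof.
move=> hs0 hs; pose K := \sum_i `|s' i| / s i.
have hK0 : 0 <= K by apply: sumr_ge0 => i _; apply: divr_ge0.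
exists (K + 1)^-1 => [|i]; first by rewrite invr_gt0; lra.
rewrite normrM gtr0_norm ?invr_gt0; last lra.
have [h0|hpos] := eqVneq (s i) 0; first by rewrite (hs _ h0) h0 normr0 mulr0.
have hpos' : 0 < s i by rewrite lt_def hpos hs0.
have : `|s' i| / s i <= K.
  rewrite /K (bigD1 i) //= lerDl; apply: sumr_ge0 => j _; exact: divr_ge0.
rewrite ler_pdivrMr // mulrC ler_pdivrMl; last lra.
by rewrite mulrDl mul1r; lra.
Qed.

Section Rigidity.
Variables (R : realType) (N : finType).
Implicit Types (o w : vec R N) (m : {set N} -> R).

(* [m +- e m'] are standardized supermodular for small [e > 0], and
   extremality forces both to be proportional to [m]. *)
Lemma extreme_rigid m m' : extreme m -> standardized m' -> m' setT = 0 ->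
  (forall U V, supmod_gap m U V = 0 -> supmod_gap m' U V = 0) -> forall S, m' S = 0.
Proof.
move=> hex hs' hT hgap; have hmT := extreme_setT_neq0 hex.
case: hex => [[hs hsm] [_ hext]].
have hgap0 (UV : {set N} * {set N}) : 0 <= supmod_gap m UV.1 UV.2.
  by have := hsm UV.1 UV.2; rewrite /supmod_gap; lra.
have [e he hbound] := small_multiple_le hgap0 (fun UV => hgap UV.1 UV.2).
have hgap_e U V : - supmod_gap m U V <= e * supmod_gap m' U V <= supmod_gap m U V.
  by rewrite -ler_norml; apply: (hbound (U, V)).
pose m1 S := (m S + e * m' S) / 2; pose m2 S := (m S - e * m' S) / 2.
have hm1 : std_supmod m1.
  split=> [S hS|U V]; first by rewrite /m1 hs // hs' // mulr0 addr0 mul0r.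
  have /andP [+ _] := hgap_e U V; rewrite /m1 /supmod_gap !mulrBr !mulrDr; lra.
have hm2 : std_supmod m2.
  split=> [S hS|U V]; first by rewrite /m2 hs // hs' // mulr0 subr0 mul0r.
  have /andP [_] := hgap_e U V; rewrite /m2 /supmod_gap !mulrBr !mulrDr; lra.
have hsplit S : m S = m1 S + m2 S by rewrite /m1 /m2; lra.
have [t [_ ht]] := hext m1 m2 hm1 hm2 hsplit.
have ht2 : t = 2^-1.
  apply: (mulIf hmT); rewrite -ht /m1 hT mulr0 addr0; lra.
move=> S; have := ht S; rewrite /m1 ht2 => h.
have /eqP : e * m' S = 0 by move: h; lra.
by rewrite mulf_eq0 gt_eqF //= => /eqP.
Qed.

(* The uv-graphs with zero gap lie on the face; [w] vanishing there makes the
   gaps of its set function vanish wherever those of [m] do. *)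
Lemma face_orthogonal_eq0 m o w : extreme m -> induced m o ->
  (forall G, acyclic G -> dotv o (eta R G) = m setT -> dotv w (eta R G) = 0) ->
  forall p, w p = 0.
Proof.
move=> hex ho hw; have [[hs _] _] := hex.
have ht : tight_at_full w 0.
  move=> H hH; apply: hw (proj1 (andP hH)) _.
  by rewrite dotv_eta (score_induced_full hs ho hH).
have hs' := tight_setfun_std w; have ho' := tight_setfun_induced ht.
have hT : tight_setfun w setT = 0.
  by rewrite -(full_score_setT hs' ho') -dotv_eta ht // order_graph_full.
have hm' := extreme_rigid hex hs' hT.
suff hw0 S : tight_setfun w S = 0 by move=> p; rewrite ho' !hw0 subr0.
apply: hm' => U V hUV; have := hw _ (uv_graph_acyclic U V).
rewrite !dotv_eta (score_uv_graph _ _ hs ho) (score_uv_graph _ _ hs' ho') hUV hT.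
by rewrite subr0 => /(_ erefl); lra.
Qed.

End Rigidity.

Section AffineDimension.
Variables (R : realType) (N : finType).
Implicit Types (o w : vec R N) (S : vec R N -> Prop).

Local Notation n := #|{: Ups N}|.

Lemma sum_dotv k (c : 'I_k -> R) (x : 'I_k -> vec R N) o :
  \sum_i c i * dotv o (x i) = \sum_p o p * \sum_i c i * x i p.
Proof.
rewrite /dotv; under eq_bigr do rewrite mulr_sumr.
rewrite exchange_big; apply: eq_bigr => p _; rewrite mulr_sumr.
by apply: eq_bigr => i _; rewrite mulrCA.
Qed.

Lemma lin_dep_of_card (C : finType) k (f : 'I_k -> C -> R) : (#|C| < k)%N ->
  exists v : 'I_k -> R, (exists i, v i != 0) /\ forall c, \sum_i v i * f i c = 0.
Proof.
move=> hk; pose A := \matrix_(i < k, j < #|C|) f i (enum_val j).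
have : ~~ row_free A.
  by apply/negP => /eqP hr; have := rank_leq_col A; lia.
rewrite -kermx_eq0 => /matrix0Pn [i [j hij]].
have hw : row i (kermx A) *m A = 0 by apply/sub_kermxP; apply: row_sub.
exists (fun l => row i (kermx A) 0 l); split; first by exists j; rewrite mxE.
move=> c; have /rowP/(_ (enum_rank c)) := hw; rewrite !mxE => h; rewrite -[RHS]h.
by apply: eq_bigr => l _; rewrite !mxE enum_rankK.
Qed.

(* Rows of [A] are the [eta G], [G] in [T]; it has full column rank, so some
   [n] rows are free, and they are nonzero, hence come from [T]. *)
Lemma free_eta_family (T : pred (graph N)) :
  (forall w, (forall G, T G -> dotv w (eta R G) = 0) -> forall p, w p = 0) ->
  exists x : 'I_n -> graph N, (forall i, T (x i)) /\
    forall c : 'I_n -> R, (forall p, \sum_i c i * eta R (x i) p = 0) -> forall i, c i = 0.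
Proof.
move=> hT; pose A := \matrix_(i < #|{: graph N}|, j < n)
  ((T (enum_val i))%:R * eta R (enum_val i) (enum_val j)).
have hfull : row_full A.
  rewrite /row_full -mxrank_tr; apply: inj_row_free => v hv.
  have hw : forall p, [ffun p => v 0 (enum_rank p)] p = 0.
    apply: hT => G hG; have /rowP/(_ (enum_rank G)) := hv; rewrite !mxE => h.
    rewrite -[RHS]h /dotv (reindex (enum_val : 'I_n -> Ups N)) /=; last first.
      by apply: onW_bij; apply: enum_val_bij.
    by apply: eq_bigr => j _; rewrite !mxE ffunE enum_valK enum_rankK hG mul1r mulrC.
  by apply/rowP => j; have := hw (enum_val j); rewrite ffunE enum_valK !mxE.
have hinj (v : 'rV_n) : v *m rowsub (fullrankfun hfull) A = 0 -> v = 0.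
  by move/eqP; rewrite (mulmx_free_eq0 _ (fullrowsub_free hfull)) => /eqP.
set x := fun i => enum_val (fullrankfun hfull i).
have hTx i : T (x i).
  apply/negPn/negP => hTi; have := hinj (delta_mx 0 i); rewrite -rowE.
  have -> : row i (rowsub (fullrankfun hfull) A) = 0.
    by apply/rowP => j; rewrite !mxE (negbTE hTi) mul0r.
  by move=> /(_ erefl) /matrixP /(_ 0 i); rewrite !mxE !eqxx => /eqP; rewrite oner_eq0.
exists x; split=> // c hc i.
have /(_ _)/rowP/(_ i) := hinj (\row_l c l); rewrite !mxE; apply.
apply/rowP => j; rewrite [LHS]mxE [RHS]mxE -[RHS](hc (enum_val j)).
by apply: eq_bigr => l _; rewrite !mxE hTx mul1r.
Qed.

Definition empty_graph : graph N := [ffun _ => set0].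

Definition fam_graph (p : Ups N) : graph N :=
  [ffun x => if x == (val p).1 then (val p).2 else set0].

Lemma empty_graph_acyclic : acyclic empty_graph.
Proof. by apply: (acyclic_of_rank (r := fun _ => 0%N)) => a b; rewrite ffunE inE. Qed.

Lemma eta_empty_graph p : eta R empty_graph p = 0.
Proof. by rewrite !ffunE; case: p => [[a B] /= /andP [/negbTE hB _]]; rewrite eq_sym hB. Qed.

Lemma fam_graph_acyclic p : acyclic (fam_graph p).
Proof.
apply: (acyclic_of_rank (r := fun x => nat_of_bool (x == (val p).1))) => a b.
rewrite ffunE; case: ifP => [_|]; last by rewrite inE.
case: p => [[a' B] /= /andP [_ hn]] hb.
by case: (eqVneq b a') hb => [->|]; rewrite ?(negbTE hn).
Qed.

Lemma eta_fam_graph p q : eta R (fam_graph p) q = (q == p)%:R.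
Proof.
rewrite !ffunE; congr ((nat_of_bool _)%:R).
case: q p => [[a B] hq] [[a' B'] hp] /=; case: (eqVneq a a') => [e|h].
  subst a'; apply/eqP/eqP => [e|/(congr1 (fun z => (val z).2)) //].
  by apply: val_inj; rewrite /= e.
have /andP [/negbTE hB _] := hq; rewrite eq_sym hB; apply/esym/negbTE/eqP.
by move/(congr1 (fun z => (val z).1)) => /= e; rewrite e eqxx in h.
Qed.

Lemma dotv_empty_graph o : dotv o (eta R empty_graph) = 0.
Proof. by apply: big1 => p _; rewrite eta_empty_graph mulr0. Qed.

Lemma dotv_fam_graph o p : dotv o (eta R (fam_graph p)) = o p.
Proof.
rewrite /dotv (bigD1 p) //= eta_fam_graph eqxx mulr1 big1 ?addr0 // => q hq.
by rewrite eta_fam_graph (negbTE hq) mulr0.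
Qed.

Lemma has_aff_indepS S S' k : (forall x, S x -> S' x) ->
  has_aff_indep S k -> has_aff_indep S' k.
Proof. by move=> h [x [hx hi]]; exists x; split=> // i; apply: h. Qed.

Lemma Ups_card_gt0 : (2 <= #|N|)%N -> (0 < n)%N.
Proof.
move=> hN; have /card_gt0P [a _] : (0 < #|N|)%N by lia.
have /card_gt0P [b] : (0 < #|[set~ a]|)%N by rewrite cardsC1; lia.
rewrite in_setC1 eq_sym => hab.
have hp : ([set b] != set0) && (a \notin [set b]).
  by rewrite in_set1 hab andbT; apply/set0Pn; exists b; rewrite in_set1.
by apply/card_gt0P; exists (exist _ (a, [set b]) hp : Ups N).
Qed.

Definition aff_indep k (x : 'I_k.+1 -> vec R N) :=
  forall c : 'I_k.+1 -> R, \sum_i c i = 0 ->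
    (forall p, \sum_i c i * x i p = 0) -> forall i, c i = 0.

(* The empty graph together with the [fam_graph p], [p] in [Ups]. *)
Lemma has_aff_indep_PN : has_aff_indep (@PN R N) n.
Proof.
pose x (i : 'I_n.+1) :=
  if unlift ord0 i is Some j then eta R (fam_graph (enum_val j)) else eta R empty_graph.
exists x; split=> [i|c hs hc].
  rewrite /x; case: (unlift ord0 i) => [j|]; apply: PN_eta.
    exact: fam_graph_acyclic.
  exact: empty_graph_acyclic.
have hl j : c (lift ord0 j) = 0.
  have := hc (enum_val j); rewrite big_ord_recl /x unlift_none eta_empty_graph mulr0 add0r.
  rewrite (bigD1 j) //= liftK eta_fam_graph eqxx mulr1 big1 ?addr0 // => j' hj'.
  by rewrite liftK eta_fam_graph (inj_eq enum_val_inj) eq_sym (negbTE hj') mulr0.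
have h0 : c ord0 = 0 by move: hs; rewrite big_ord_recl big1 ?addr0.
by move=> i; case: (unliftP ord0 i) => [j ->|->].
Qed.

Lemma has_aff_indepN S k : (n < k)%N -> ~ has_aff_indep S k.
Proof.
move=> hk [x [_ hi]].
have hcard : (#|{: option (Ups N)}| < k.+1)%N by rewrite card_option ltnS.
have [v [[i /eqP hv] hsum]] :=
  lin_dep_of_card (fun i (c : option (Ups N)) => if c is Some p then x i p else 1) hcard.
apply/hv/hi => [|p]; last exact: hsum (Some p).
by rewrite -[RHS](hsum None); apply: eq_bigr => l _; rewrite mulr1.
Qed.

Lemma aff_dim_PN : aff_dim (@PN R N) n.
Proof. by split; [exact: has_aff_indep_PN | apply: has_aff_indepN]. Qed.

(* A dependence among the coordinates other than [p1] and the constant [1]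
   extends to [p1], since [o p1 x_p1] is determined by the face equation. *)
Lemma face_has_aff_indepN o u k p1 : o p1 != 0 -> (n <= k)%N ->
  ~ has_aff_indep (face_of o u) k.
Proof.
move=> ho1 hk [x [hx hi]].
have hcard : (#|{: option {p : Ups N | p != p1}}| < k.+1)%N.
  rewrite card_option card_sig ltnS (eq_card (B := predC1 p1)) // cardC1.
  have hn : (0 < n)%N by apply/card_gt0P; exists p1.
  by apply: leq_trans hk; rewrite prednK.
have [v [[i /eqP hv] hsum]] := lin_dep_of_card
  (fun i (c : option {p : Ups N | p != p1}) => if c is Some p then x i (val p) else 1) hcard.
have hsv : \sum_i v i = 0.
  by rewrite -[RHS](hsum None); apply: eq_bigr => l _; rewrite mulr1.
have hq q : q != p1 -> \sum_i v i * x i q = 0 by move=> hq1; exact: hsum (Some (exist _ q hq1)).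
apply/hv/hi => [//|q]; case: (eqVneq q p1) => [->|]; last exact: hq.
have hdot : \sum_p o p * \sum_i v i * x i p = 0.
  by rewrite -sum_dotv; under eq_bigr do rewrite (hx _).2; rewrite -mulr_suml hsv mul0r.
move: hdot; rewrite (bigD1 p1) //= [X in _ + X]big1 => [|q' hq']; last by rewrite (hq q' hq') mulr0.
by rewrite addr0 => /eqP; rewrite mulf_eq0 (negbTE ho1) => /eqP.
Qed.

Definition extend_pt k (x : 'I_k.+1 -> vec R N) y (i : 'I_k.+2) : vec R N :=
  if unlift ord_max i is Some j then x j else y.

Lemma lift_max_widen k (j : 'I_k.+1) : lift ord_max j = widen_ord (leqnSn _) j.
Proof. exact/val_inj/lift_max. Qed.

Lemma extend_pt_widen k (x : 'I_k.+1 -> vec R N) y j :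
  extend_pt x y (widen_ord (leqnSn _) j) = x j.
Proof. by rewrite /extend_pt -lift_max_widen liftK. Qed.

Lemma extend_pt_max k (x : 'I_k.+1 -> vec R N) y : extend_pt x y ord_max = y.
Proof. by rewrite /extend_pt unlift_none. Qed.

Lemma aff_indep_extend k (x : 'I_k.+1 -> vec R N) y o u : aff_indep x ->
  (forall i, dotv o (x i) = u) -> dotv o y != u -> aff_indep (extend_pt x y).
Proof.
move=> hx hxo hyo c hc0 hc.
have hlast : c ord_max = 0.
  have : \sum_i c i * (dotv o (extend_pt x y i) - u) = 0.
    under eq_bigr do rewrite mulrBr.
    rewrite sumrB sum_dotv -mulr_suml hc0 mul0r subr0.
    by apply: big1 => p _; rewrite hc mulr0.
  rewrite big_ord_recr big1 /= ?add0r => [|j _]; last by rewrite extend_pt_widen hxo subrr mulr0.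
  by rewrite extend_pt_max => /eqP; rewrite mulf_eq0 subr_eq0 (negbTE hyo) orbF => /eqP.
have hinit : forall j, c (widen_ord (leqnSn _) j) = 0.
  apply: hx => [|p]; first by rewrite big_ord_recr /= hlast addr0 in hc0.
  have h := hc p; rewrite big_ord_recr /= hlast mul0r addr0 in h.
  by rewrite -[RHS]h; apply: eq_bigr => j _; rewrite extend_pt_widen.
move=> i; case: (unliftP ord_max i) => [j ->|->] //.
by rewrite lift_max_widen hinit.
Qed.

End AffineDimension.

Section Facets.
Variables (R : realType) (N : finType).
Implicit Types (o : vec R N) (m : {set N} -> R).

Definition induced_vec m : vec R N :=
  [ffun p : Ups N => m ((val p).1 |: (val p).2) - m (val p).2].

Lemma induced_vecP m : induced m (induced_vec m).
Proof. by move=> p; rewrite ffunE. Qed.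

Lemma dotv_affine o1 o t x :
  dotv [ffun p => o1 p - t * o p] x = dotv o1 x - t * dotv o x.
Proof.
rewrite /dotv mulr_sumr -sumrB; apply: eq_bigr => p _.
by rewrite ffunE mulrBl mulrA.
Qed.

Lemma facet_strict o u : facet_defining o u -> exists2 y, PN y & dotv o y < u.
Proof.
move=> [hval [d [[hPN _] [_ hFn]]]]; apply: NNPP => hno; apply/hFn/(has_aff_indepS _ hPN).
move=> z hz; split=> //; apply/eqP; rewrite eq_le hval //= leNgt.
by apply/negP => hlt; apply: hno; exists z.
Qed.

(* [t] is fixed by a point [y] of P_N off the facet; a point of P_N off the
   hyperplane of [o1 - t o] would extend the facet's d+1 affinely independent
   points and [y] to d+3 of them. *)
Lemma facet_scale o u o1 u1 : facet_defining o u -> valid_ineq o1 u1 ->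
  (forall x, face_of o u x -> dotv o1 x = u1) ->
  exists2 t, 0 <= t & forall z, PN z -> dotv o1 z - u1 = t * (dotv o z - u).
Proof.
move=> hf hv1 hface; have [y hyP hyu] := facet_strict hf.
case: hf => [_ [d [[_ hPNn] [[x [hx hxi]] _]]]].
pose t := (u1 - dotv o1 y) / (u - dotv o y).
have hden : u - dotv o y != 0 by rewrite subr_eq0 gt_eqF.
have hty : dotv o1 y - u1 = t * (dotv o y - u).
  by rewrite /t -[dotv o y - u]opprB mulrN divfK //; lra.
exists t => [|z hz]; first by apply: divr_ge0; rewrite subr_ge0 ?hv1 // ltW.
apply/eqP; rewrite -subr_eq0; apply/negPn/negP => hne; apply: hPNn.
have hxy := aff_indep_extend hxi (fun i => (hx i).2) (negbT (lt_eqF hyu)).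
have hxyz := aff_indep_extend (o := [ffun p => o1 p - t * o p]) (u := u1 - t * u) hxy.
exists (extend_pt (extend_pt x y) z); split=> [i|].
  by rewrite /extend_pt; case: unlift => [j|//]; case: unlift => [l|//]; case: (hx l).
apply: hxyz => [i|]; rewrite dotv_affine; last by apply: contra hne => /eqP h; apply/eqP; lra.
rewrite /extend_pt; case: unlift => [j|]; last by lra.
by rewrite (hface _ (hx j)) (hx j).2.
Qed.

Lemma facet_tight_extreme o u : facet_defining o u -> tight_at_full o u ->
  extreme (tight_setfun o).
Proof.
move=> hf ht.
have hs := tight_setfun_std o; have ho := tight_setfun_induced ht.
have huT : u = tight_setfun o setT.
  by rewrite -(full_score_setT hs ho) -dotv_eta ht // order_graph_full.
have hval : valid_ineq o (tight_setfun o setT) by rewrite -huT; case: hf.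
have hsm := valid_induced_supermodular hs ho hval.
split; first by split.
split=> [hm0|m1 m2 hm1 hm2 hsplit].
  have [y _] := facet_strict hf; rewrite huT hm0.
  by rewrite /dotv big1 ?ltxx // => p _; rewrite ho !hm0 subr0 mul0r.
have hv1 := induced_valid hm1 (induced_vecP m1).
have hv2 := induced_valid hm2 (induced_vecP m2).
have hface x : face_of o u x -> dotv (induced_vec m1) x = m1 setT.
  case=> hx hox; have := hv1 x hx; have := hv2 x hx.
  have : dotv o x = dotv (induced_vec m1) x + dotv (induced_vec m2) x.
    rewrite /dotv -big_split; apply: eq_bigr => p _.
    by rewrite /= ho !ffunE !hsplit; ring.
  by move: hox; rewrite huT hsplit; lra.
have [t ht0 hscale] := facet_scale hf hv1 hface.
exists t; split=> //; apply: induced_scale hm1.1 hs (induced_vecP m1) ho _ => p.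
have := hscale _ (PN_eta R (fam_graph_acyclic p)).
have := hscale _ (PN_eta R (empty_graph_acyclic N)).
by rewrite !dotv_fam_graph !dotv_empty_graph; lra.
Qed.

(* The face is spanned by graphs because only [w = 0] is orthogonal to all of
   its vertices, and it is a proper face because [o] is nonzero. *)
Lemma extreme_facet m o : (2 <= #|N|)%N -> extreme m -> induced m o ->
  facet_defining o (m setT).
Proof.
move=> hN hex ho; have [[hs _] [hnz _]] := hex.
split; first exact: induced_valid hex.1 ho.
have [p1 hp1] : exists p1, o p1 != 0.
  case: (boolP [exists p, o p != 0]) => [/existsP //|/existsPn ho0].
  case: hnz => S; rewrite (induced_scale hs hs ho ho (t := 0)) ?mul0r // => p.
  by move/negPn/eqP: (ho0 p) => ->; rewrite mul0r.
pose T := [pred G | acyclic G && (dotv o (eta R G) == m setT)].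
have hspan w : (forall G, T G -> dotv w (eta R G) = 0) -> forall p, w p = 0.
  move=> hw; apply: face_orthogonal_eq0 hex ho _ => G hG hGo.
  by apply: hw; rewrite /T /= hG hGo eqxx.
have := free_eta_family hspan.
have := face_has_aff_indepN (u := m setT) hp1; have := aff_dim_PN R N.
move: #|{: Ups N}| (Ups_card_gt0 hN) => [//|d] _ hPN hface [x [hxT hxi]].
exists d; split=> //; split; last by apply: hface.
exists (fun i => eta R (x i)); split=> [i|c _ hc]; last exact: hxi.
by case/andP: (hxT i) => hG /eqP; split; [exact: PN_eta|].
Qed.

End Facets.

Theorem theorem2 (R : realType) (N : finType) (hN : (2 <= #|N|)%N)
    (o : vec R N) (u : R) :
  (facet_defining o u /\ tight_at_full o u) <->
  (exists m : {set N} -> R,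
     extreme m /\
     (forall p : Ups N, o p = m ((val p).1 |: (val p).2) - m (val p).2) /\
     (forall H : graph N, full_graph H -> u = dotv o (eta R H))).
Proof.
split=> [[hf ht]|[m [hex [ho hu]]]].
  exists (tight_setfun o); split; first exact: facet_tight_extreme hf ht.
  by split=> [|H hH]; [exact: tight_setfun_induced ht | rewrite ht].
have [[hs _] _] := hex.
have -> : u = m setT.
  by rewrite (hu _ (order_graph_full (fun=> 0%N))) dotv_eta (full_score_setT hs ho).
split; first exact: extreme_facet hN hex ho.
by move=> H hH; rewrite dotv_eta (score_induced_full hs ho hH).
Qed.
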